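(* Let $(X,d)$ be a separable complete metric space, $(\Omega,\mathsf{F},\mathbb{P})$ a probability space with a filtration $(\mathsf{F}_n)$, and $S\subseteq X$ non-empty and closed. Let $\phi:X\times X\to[0,\infty)$ be a Carath\'eodory distance with $\phi(x,x)=0$ for all $x\in X$ that satisfies the weak quasi-triangle inequality with a concave nondecreasing function $H:[0,\infty)\to[0,\infty)$. Let $(x_n)$ be an $X$-valued stochastic process adapted to $(\mathsf{F}_n)$ which is stochastically $\phi$-quasi-Fej\'er monotone w.r.t.\ $S$ and $(\mathsf{F}_n)$, i.e.\ there are $(\zeta_n),(\xi_n)\in\ell^1_+(\mathsf{F}_n)$ with $\mathbb{E}[\phi(z,x_{n+1})\mid\mathsf{F}_n]\le(1+\zeta_n)\phi(z,x_n)+\xi_n$ a.s.\ for all $n\in\mathbb{N}$ and all $z\in S$. Suppose that $\mathbb{E}[\phi(o,x_n)]<\infty$ for all $n\in\mathbb{N}$, for some fixed $o\in S$. Then $(x_n)$ is strongly stochastically $\phi$-quasi-Fej\'er monotone w.r.t.\ $S$ and $(\mathsf{F}_n)$ (with the same error sequences).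
   Context: $X$ carries its Borel $\sigma$-algebra. A Carath\'eodory distance is a function $\phi:X\times X\to[0,\infty)$ continuous in its left argument and Borel measurable in its right argument. $\phi$ satisfies the weak quasi-triangle inequality with $H$ if $\phi(x,y)\le H(\phi(x,o)+\phi(y,o))$ for all $x,y,o\in X$. $\ell^1_+(\mathsf{F}_n)$ is the set of sequences of nonnegative random variables $(\xi_n)$ with $\xi_n$ $\mathsf{F}_n$-measurable and $\sum_n\xi_n<\infty$ a.s. Strong stochastic $\phi$-quasi-Fej\'er monotonicity w.r.t.\ $S$ means: $\mathbb{E}[\phi(z,x_{n+1})\mid\mathsf{F}_n]\le(1+\zeta_n)\phi(z,x_n)+\xi_n$ a.s.\ for all $n\in\mathbb{N}$ and all $X$-valued $\mathsf{F}_n$-measurable random variables $z$ with $z\in S$ a.s.\ and $\mathbb{E}[\phi(z,x_n)]<\infty$. *)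

From HB Require Import structures.
From mathcomp Require Import all_boot all_order all_algebra.
From mathcomp Require Import all_classical all_reals all_analysis measurable_realfun.
Set Implicit Arguments. Unset Strict Implicit. Unset Printing Implicit Defensive.
Import Order.TTheory GRing.Theory Num.Theory numFieldNormedType.Exports.
Local Open Scope classical_set_scope.
Local Open Scope ring_scope.

Definition borel_sets (T : topologicalType) : set (set T) := <<s open >>.

Definition separable_space (T : topologicalType) : Prop :=
  exists D : set T, countable D /\ dense D.

Definition meas_to_borel {Om : Type} (X : topologicalType)
  (G : set (set Om)) (f : Om -> X) : Prop :=
  forall B, borel_sets B -> G (f @^-1` B).

Definition meas_real {Om : Type} {R : realType}
  (G : set (set Om)) (f : Om -> R) : Prop :=
  forall U : set R, measurable U -> G (f @^-1` U).

Definition meas_ereal {Om : Type} {R : realType}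
  (G : set (set Om)) (f : Om -> \bar R) : Prop :=
  forall U : set (\bar R), measurable U -> G (f @^-1` U).

Definition filtration {d} {Om : measurableType d} (F : nat -> set (set Om)) :=
  (forall n, sigma_algebra setT (F n)) /\
  (forall n, F n `<=` measurable) /\
  (forall n m, (n <= m)%N -> F n `<=` F m).

Definition caratheodory {R : realType} (X : topologicalType) (phi : X -> X -> R) :=
  (forall y, continuous (fun x => phi x y)) /\
  (forall x, meas_real (@borel_sets X) (fun y => phi x y)).

Definition weak_quasi_triangle {R : realType} (X : Type) (phi : X -> X -> R)
  (H : R -> R) :=
  forall x y o, phi x y <= H (phi x o + phi y o).

Definition ell1_plus {d} {R : realType} {Om : measurableType d}
  (P : probability Om R) (F : nat -> set (set Om)) (xi : nat -> Om -> R) :=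
  (forall n w, 0 <= xi n w) /\ (forall n, meas_real (F n) (xi n)) /\
  {ae P, forall w, (\sum_(0 <= n <oo) (xi n w)%:E < +oo)%E}.

Definition is_cond_exp {d} {R : realType} {Om : measurableType d}
  (P : probability Om R) (G : set (set Om)) (Y W : Om -> \bar R) :=
  meas_ereal G W /\
  forall A, G A -> (\int[P]_(w in A) Y w = \int[P]_(w in A) W w)%E.

(* E[Y | G] <= Z almost surely (for every, equivalently some, version) *)
Definition cond_exp_le {d} {R : realType} {Om : measurableType d}
  (P : probability Om R) (G : set (set Om)) (Y Z : Om -> \bar R) :=
  forall W, is_cond_exp P G Y W -> {ae P, forall w, (W w <= Z w)%E}.

Definition stoch_qF {d} {R : realType} {Om : measurableType d}
  (P : probability Om R) (F : nat -> set (set Om)) (X : Type)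
  (phi : X -> X -> R) (S : set X) (x : nat -> Om -> X)
  (zeta xi : nat -> Om -> R) :=
  forall n (z : X), S z ->
    cond_exp_le P (F n) (fun w => (phi z (x n.+1 w))%:E)
      (fun w => ((1 + zeta n w) * phi z (x n w) + xi n w)%:E).

Definition strong_stoch_qF {d} {R : realType} {Om : measurableType d}
  (P : probability Om R) (F : nat -> set (set Om)) (X : topologicalType)
  (phi : X -> X -> R) (S : set X) (x : nat -> Om -> X)
  (zeta xi : nat -> Om -> R) :=
  forall n (z : Om -> X), meas_to_borel (F n) z ->
    {ae P, forall w, S (z w)} ->
    (\int[P]_w (phi (z w) (x n w))%:E < +oo)%E ->
    cond_exp_le P (F n) (fun w => (phi (z w) (x n.+1 w))%:E)
      (fun w => ((1 + zeta n w) * phi (z w) (x n w) + xi n w)%:E).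

From HB Require Import structures.
From mathcomp Require Import all_boot all_order all_algebra.
From mathcomp Require Import all_classical all_reals all_analysis measurable_realfun.
From mathcomp Require Import lra.
Import Order.TTheory GRing.Theory Num.Theory numFieldNormedType.Exports.
Local Open Scope classical_set_scope.
Local Open Scope ring_scope.

(* For a constant [z = s] in [S], integrating the hypothesis over a set [A] of
   [F n] gives \int_A phi s (x n.+1) <= \int_A ((1 + zeta n) phi s (x n) + xi n).
   An [F n]-measurable [z] with values in [S] is approximated uniformly by
   [F n]-measurable step functions with values in a countable dense subset of
   [S], chosen so that [phi (_ w) (x n w)] is approximated as well; the constant
   case holds on each step, and Fatou's lemma together with the continuity of
   [phi] in its first argument yields the same inequality for [z] on every [A]
   where [zeta n] is bounded. A version of the conditional expectation of
   [phi z (x n.+1)] has the same integrals over these sets, hence lies below the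
   right-hand side almost surely. *)

Section sub_sigma_algebra.
Context {d} {T : measurableType d} {R : realType} {G : set (set T)}.
Hypothesis sG : sigma_algebra setT G.
Local Notation TG := (g_sigma_algebraType G).

Lemma g_measurableE : (measurable : set (set TG)) = G.
Proof. exact: measurable_g_measurableTypeE. Qed.

Lemma meas_realE (f : T -> R) : meas_real G f <-> measurable_fun [set: TG] f.
Proof.
split=> [mf _ U mU|mf U mU]; first by rewrite setTI g_measurableE; exact: mf.
by have := mf measurableT U mU; rewrite setTI g_measurableE.
Qed.

Lemma meas_erealE (f : T -> \bar R) : meas_ereal G f <-> measurable_fun [set: TG] f.
Proof.
split=> [mf _ U mU|mf U mU]; first by rewrite setTI g_measurableE; exact: mf.
by have := mf measurableT U mU; rewrite setTI g_measurableE.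
Qed.

Lemma sub_sigmaI {A B : set T} : G A -> G B -> G (A `&` B).
Proof.
move=> GA GB; have : measurable (A `&` B : set TG).
  by apply: measurableI; rewrite g_measurableE.
by rewrite g_measurableE.
Qed.

Lemma meas_real_le {f : T -> R} (c : R) : meas_real G f -> G [set w | f w <= c].
Proof.
move=> mf; have -> : [set w | f w <= c] = f @^-1` `]-oo, c].
  by apply/seteqP; split => w /=; rewrite in_itv.
exact: mf (measurable_itv _).
Qed.

Lemma meas_to_borel_cst (X : topologicalType) (s : X) : meas_to_borel G (fun=> s).
Proof.
move=> B _; case: sG => G0 GC _; rewrite preimage_cst; case: ifPn => _ //.
by rewrite -(setD0 setT); exact: GC.
Qed.

Lemma meas_to_borel_closed {X : ptopologicalType} {z : T -> X} {S : set X} :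
  meas_to_borel G z -> closed S -> G (z @^-1` S).
Proof.
move=> mz cS; apply: mz; rewrite -(setCK S); apply: sigma_algebraC.
exact: sub_sigma_algebra (closed_openC cS).
Qed.

Hypothesis GM : G `<=` measurable.

Lemma meas_real_measurable (f : T -> R) : meas_real G f -> measurable_fun setT f.
Proof. by move=> mf _ U mU; rewrite setTI; apply: GM; exact: mf. Qed.

Lemma meas_ereal_measurable (f : T -> \bar R) : meas_ereal G f -> measurable_fun setT f.
Proof. by move=> mf _ U mU; rewrite setTI; apply: GM; exact: mf. Qed.

End sub_sigma_algebra.

Section truncation_layers.
Context {T : Type} {R : realType} (Y : T -> R).

Definition trunc_layer (j : nat) (w : T) : R :=
  Num.min (Y w) j.+1%:R - Num.min (Y w) j%:R.

Lemma trunc_layer_ge0 j w : 0 <= trunc_layer j w.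
Proof. by rewrite subr_ge0 le_min2 // ler_nat. Qed.

Lemma trunc_layer_le1 j w : trunc_layer j w <= 1.
Proof.
rewrite /trunc_layer -natr1; have := ler0n R j.
by case: (lerP (Y w) j%:R); case: (lerP (Y w) (j%:R + 1)); lra.
Qed.

Hypothesis Y0 : forall w, 0 <= Y w.

Lemma sum_trunc_layer w N :
  (\sum_(0 <= j < N) (trunc_layer j w)%:E)%E = (Num.min (Y w) N%:R)%:E.
Proof.
elim: N => [|N IH]; first by rewrite big_nil min_r.
by rewrite big_nat_recr //= IH -EFinD /trunc_layer addrC subrK.
Qed.

Lemma nneseries_trunc_layer w :
  (\sum_(0 <= j <oo) (trunc_layer j w)%:E)%E = (Y w)%:E.
Proof.
apply: cvg_lim => //; apply: cvg_near_cst.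
have [N YN] : exists N : nat, Y w <= N%:R.
  by exists (Num.bound (Y w)); apply/ltW/archi_boundP.
near=> k; rewrite sum_trunc_layer min_l // (le_trans YN) // ler_nat.
by near: k; exact: nbhs_infty_ge.
Unshelve. all: by end_near.
Qed.

End truncation_layers.

Section cond_exp_existence.
Context d (T : measurableType d) (R : realType) (P : probability T R)
  (G : set (set T)).
Hypotheses (sG : sigma_algebra setT G) (GM : G `<=` measurable).
Local Notation TG := (g_sigma_algebraType G).

Let g_measurableW (A : set TG) : measurable A -> measurable (A : set T).
Proof. by rewrite g_measurableE // => /GM. Qed.

Definition to_sub_sigma : T -> TG := id.

Let measurable_to_sub_sigma : measurable_fun setT to_sub_sigma.
Proof. by move=> _ B mB; rewrite setTI; exact: g_measurableW. Qed.

HB.instance Definition _ :=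
  isMeasurableFun.Build _ _ T TG to_sub_sigma measurable_to_sub_sigma.

Definition sub_sigma_prob := distribution P to_sub_sigma.

Lemma ge0_integral_sub_sigma (B : set T) (g : TG -> \bar R) : G B ->
  measurable_fun setT g -> (forall w, (0 <= g w)%E) ->
  (\int[sub_sigma_prob]_(w in (B : set TG)) g w = \int[P]_(w in B) g w)%E.
Proof.
move=> GB mg g0; have mB : measurable (B : set TG) by rewrite g_measurableE.
by rewrite ge0_integral_pushforward //; exact: measurable_funTS.
Qed.

Section cond_exp_ge0.
Variable Y : T -> R.
Hypotheses (Y0 : forall w, 0 <= Y w) (mY : measurable_fun setT Y).

Definition layer_integral (j : nat) (B : set TG) : \bar R :=
  (\int[P]_(w in (B : set T)) (trunc_layer Y j w)%:E)%E.

Let measurable_layer j : measurable_fun setT (fun w => (trunc_layer Y j w)%:E).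
Proof.
apply/measurable_EFinP/measurable_funB; apply: measurable_minr => //;
  exact: measurable_cst.
Qed.

Let layer_integral0 j : layer_integral j set0 = 0%E.
Proof. by rewrite /layer_integral integral_set0. Qed.

Let layer_integral_ge0 j B : (0 <= layer_integral j B)%E.
Proof. by apply: integral_ge0 => w _; rewrite lee_fin trunc_layer_ge0. Qed.

Let layer_integral_sigma_additive j : semi_sigma_additive (layer_integral j).
Proof.
move=> F mF tF mUF.
apply: (@semi_sigma_additive_nng_induced _ _ _ P (fun w => (trunc_layer Y j w)%:E)).
- exact: measurable_layer.
- by move=> w; rewrite lee_fin trunc_layer_ge0.
- by move=> i; exact: g_measurableW.
- exact: tF.
- exact: g_measurableW.
Qed.

HB.instance Definition _ j := isMeasure.Build _ TG R (layer_integral j)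
  (layer_integral0 j) (@layer_integral_ge0 j) (@layer_integral_sigma_additive j).

Let layer_integral_fin j : fin_num_fun (layer_integral j).
Proof.
move=> B mB; rewrite ge0_fin_numE //.
apply: (@le_lt_trans _ _ (\int[P]_(w in (B : set T)) (cst 1%E w))%E).
  apply: ge0_le_integral => //; first exact: g_measurableW.
  - by move=> w _; rewrite lee_fin trunc_layer_ge0.
  - exact: measurable_funTS.
  - by move=> w _; rewrite lee_fin trunc_layer_le1.
rewrite integral_cst ?mul1e; last exact: g_measurableW.
rewrite (le_lt_trans (probability_le1 _ _)) ?ltey //; exact: g_measurableW.
Qed.

HB.instance Definition _ j :=
  Measure_isFinite.Build _ TG R (layer_integral j) (@layer_integral_fin j).

Let layer_integral_abs_cont j : layer_integral j `<< sub_sigma_prob.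
Proof.
move=> B B0 A mA AB; rewrite /layer_integral null_set_integral //.
- exact: g_measurableW.
- exact: measurable_funTS.
- exact: B0 A mA AB.
Qed.

(* Radon-Nikodym applies to each (bounded) layer of [Y]; the densities are
   summed back. *)
Lemma cond_exp_ge0_exists :
  exists2 W, (forall w, 0 <= W w)%E & is_cond_exp P G (fun w => (Y w)%:E) W.
Proof.
have [g gP] := choice (fun j => radon_nikodym_sigma_finite (layer_integral_abs_cont j)).
have g0 j w : (0 <= g j w)%E by case: (gP j) => + _ _ _; apply.
have mg j : measurable_fun [set: TG] (g j).
  by case: (gP j) => _ _ + _; exact: measurable_int.
pose W w := (\sum_(0 <= j <oo) g j w)%E.
have mW : measurable_fun [set: TG] W by exact: ge0_emeasurable_sum.
have W0 w : (0 <= W w)%E by apply: nneseries_ge0 => j _ _; exact: g0.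
exists W => //; split; first exact/meas_erealE.
move=> A GA; have mA : measurable (A : set TG) by rewrite g_measurableE.
rewrite -[RHS]ge0_integral_sub_sigma // integral_nneseries //; last first.
  by move=> j; exact: measurable_funTS.
under eq_integral do rewrite -nneseries_trunc_layer //.
rewrite integral_nneseries //.
- by apply: eq_eseriesr => j _; case: (gP j) => _ _ _ <-.
- exact: GM.
- by move=> j; exact: measurable_funTS.
- by move=> j w _; rewrite lee_fin trunc_layer_ge0.
Qed.

End cond_exp_ge0.

End cond_exp_existence.

Definition first_index {T : Type} (C : nat -> set T) (w : T) : nat :=
  match pselect (exists j, C j w) with
  | left h => ex_minn (P := fun j => `[< C j w >])
       (let: ex_intro j hj := h in ex_intro _ j (asboolT hj))
  | right _ => 0%N
  end.

Section first_index.
Context {T : Type} (C : nat -> set T).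

Lemma first_indexP {w} : (exists j, C j w) ->
  C (first_index C w) w /\ (forall i, C i w -> (first_index C w <= i)%N).
Proof.
rewrite /first_index; case: pselect => // h _.
case: ex_minnP => m /asboolP Cm mmin; split => // i Ci; exact/mmin/asboolP.
Qed.

Lemma first_index_out w : ~ (exists j, C j w) -> first_index C w = 0%N.
Proof. by rewrite /first_index; case: pselect. Qed.

Lemma first_index_preimage j : first_index C @^-1` [set j] =
  (C j `\` \bigcup_(i in [set i | (i < j)%N]) C i) `|`
  (if j == 0%N then ~` \bigcup_i C i else set0).
Proof.
apply/seteqP; split => w /=.
  move=> Jw; have [Cw|nCw] := pselect (exists j, C j w).
    have [CJ Jmin] := first_indexP Cw; left; rewrite -Jw; split => // -[i /= iJ Ci].
    by have := Jmin i Ci; rewrite leqNgt iJ.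
  by right; rewrite -Jw first_index_out //= => -[i _ Ci]; apply: nCw; exists i.
case=> [[Cj nCi]|].
  have [CJ Jmin] := first_indexP (ex_intro _ j Cj).
  apply/eqP; rewrite eqn_leq Jmin //= leqNgt; apply/negP => Jj.
  by apply: nCi; exists (first_index C w).
by case: eqP => // -> nC; apply: first_index_out => -[i Ci]; apply: nC; exists i.
Qed.

End first_index.

Section first_index_measurable.
Context d (T : measurableType d) (C : nat -> set T).
Hypothesis mC : forall j, measurable (C j).

Lemma measurable_first_index j : measurable (first_index C @^-1` [set j]).
Proof.
rewrite first_index_preimage; apply: measurableU.
  by apply: measurableD => //; exact: bigcup_measurable.
by case: eqP => // _; apply: measurableC; exact: bigcup_measurable.
Qed.

End first_index_measurable.

Lemma measurable_fun_piecewise {d} {T : measurableType d} {d'} {U : measurableType d'}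
    (J : T -> nat) (g : nat -> T -> U) :
  (forall j, measurable (J @^-1` [set j])) -> (forall j, measurable_fun setT (g j)) ->
  measurable_fun setT (fun w => g (J w) w).
Proof.
move=> mJ mg _ B mB; rewrite setTI.
have -> : (fun w => g (J w) w) @^-1` B = \bigcup_j (J @^-1` [set j] `&` g j @^-1` B).
  by apply/seteqP; split => [w Bw|w [j _ [/= <-]]] //; exists (J w).
apply: bigcup_measurable => j _; apply: measurableI => //.
by rewrite -[X in measurable X]setTI; exact: mg.
Qed.

Lemma ge0_integral_fibers {d} {T : measurableType d} {R : realType}
    (mu : {measure set T -> \bar R}) (J : T -> nat) (A : set T) (f : T -> \bar R) :
  measurable A -> (forall j, measurable (J @^-1` [set j])) ->
  measurable_fun A f -> (forall w, A w -> (0 <= f w)%E) ->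
  (\int[mu]_(w in A) f w =
   \sum_(0 <= j <oo) \int[mu]_(w in A `&` J @^-1` [set j]) f w)%E.
Proof.
move=> mA mJ mf f0.
have AE : A = \bigcup_j (A `&` J @^-1` [set j]).
  by apply/seteqP; split => [w Aw|w [j _ []]] //; exists (J w).
rewrite [in LHS]AE ge0_integral_bigcup -?AE //.
- by move=> j; exact: measurableI.
- apply/trivIsetP => i j _ _ ij; apply/seteqP; split => // w [[_ /= iw] [_ /= jw]].
  by move: ij; rewrite -iw -jw eqxx.
Qed.

Section dense_sequences.
Context {R : realType} {X : pseudoPMetricType R}.

Lemma separable_dense_seq : separable_space X ->
  exists e : nat -> X, forall x (r : R), 0 < r -> exists j, ball x r (e j).
Proof.
move=> [D [cD dD]]; have /pcard_surjP [e eD] := cD.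
exists e => x r r0.
have [y [Oy Dy]] : (ball x r)° `&` D !=set0.
  apply: dD; last exact: open_interior.
  by exists x; case: (open_nbhs_ball x (PosNum r0)).
by have [j _ ejy] := eD y Dy; exists j; rewrite ejy; exact: interior_subset.
Qed.

Lemma separable_subset_dense_seq (S : set X) : separable_space X -> S !=set0 ->
  exists e : nat -> X, (forall j, S (e j)) /\
    forall x, S x -> forall r : R, 0 < r -> exists j, ball x r (e j).
Proof.
move=> sepX [s0 Ss0]; have [e eD] := separable_dense_seq sepX.
(* [f (i, K)] is a point of [S] in the ball of radius [1/(K+1)] around [e i],
   if there is one. *)
pose near_e (p : nat * nat) t := S t /\ ball (e p.1) p.2.+1%:R^-1 t.
have [f fP] : {f : nat * nat -> X & forall p, S (f p) /\
    ((exists t, near_e p t) -> near_e p (f p))}.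
  apply: (@choice _ _ (fun p s => S s /\ ((exists t, near_e p t) -> near_e p s))) => p.
  have [[t et]|ne] := pselect (exists t, near_e p t); last by exists s0.
  by exists t; split => //; case: et.
exists (fun n => if unpickle n is Some p then f p else s0); split.
  by move=> n; case: unpickle => [p|] //; case: (fP p).
move=> x Sx r r0; have r20 : 0 < r / 2 by rewrite divr_gt0.
have [K _ KP] := near_infty_natSinv_lt (PosNum r20).
have [i ei] : exists i, ball x K.+1%:R^-1 (e i) by apply: eD; rewrite invr_gt0.
exists (pickle (i, K)); rewrite pickleK.
have [_ [_ /(ball_triangle ei) fb]] : S (f (i, K)) /\ near_e (i, K) (f (i, K)).
  case: (fP (i, K)) => Sf fe; split => //.
  by apply: fe; exists x; split => //; exact: ball_sym.
have KP' : K.+1%:R^-1 < r / 2 := KP K (leqnn K).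
by apply: le_ball fb; rewrite [leRHS]splitr lerD // ltW.
Qed.

Lemma dense_seq_interior_ball {S : set X} {e : nat -> X} {x} {r delta : R} :
  (forall x, S x -> forall r : R, 0 < r -> exists j, ball x r (e j)) ->
  S x -> 0 < r -> 0 < delta ->
  exists j, ball x delta (e j) /\ (ball (e j) r)° x.
Proof.
move=> eD Sx r0 delta0.
have r20 : 0 < r / 2 by rewrite divr_gt0.
have [j xej] : exists j, ball x (Num.min delta (r / 2)) (e j).
  by apply: eD => //; rewrite lt_min delta0 r20.
exists j; split; first by apply: le_ball xej; rewrite ge_min lexx.
have : (ball x (r / 2))° `<=` (ball (e j) r)°.
  apply: interiorS => y xy; rewrite [r]splitr.
  by apply: ball_triangle (ball_sym _) xy; apply: le_ball xej; rewrite ge_min lexx orbT.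
by apply; case: (open_nbhs_ball x (PosNum r20)).
Qed.

Lemma cvg_ball_invSn {u : nat -> X} {p : X} :
  (forall k, ball p k.+1%:R^-1 (u k)) -> u @ \oo --> p.
Proof.
move=> pu; apply/cvg_ballP => r r0; have [K _ KP] := near_infty_natSinv_lt (PosNum r0).
by exists K => // k /= Kk; apply: le_ball (pu k); exact/ltW/KP.
Qed.

End dense_sequences.

Section caratheodory_measurable.
Context {R : realType} {X : pseudoPMetricType R} {phi : X -> X -> R}.
Hypothesis phi_car : caratheodory phi.
Context d (T : measurableType d) (G : set (set T)).

Lemma meas_real_phi_cst (y : T -> X) (s : X) :
  meas_to_borel G y -> meas_real G (fun w => phi s (y w)).
Proof. by move=> my U mU; exact: my _ (phi_car.2 s U mU). Qed.

Hypotheses (sepX : separable_space X) (sG : sigma_algebra setT G).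

(* [z] is approximated by the countably-valued [e (first_index (C k) w)], at
   distance at most [1/(k+1)]; continuity of [phi] in its left argument makes
   [phi] of the approximations converge. *)
Lemma meas_real_caratheodory (z y : T -> X) :
  meas_to_borel G z -> meas_to_borel G y -> meas_real G (fun w => phi (z w) (y w)).
Proof.
move=> mz my; have [e eD] := separable_dense_seq sepX.
pose C k j := z @^-1` (ball (e j) k.+1%:R^-1)°.
have mC k j : measurable (C k j : set (g_sigma_algebraType G)).
  by rewrite g_measurableE //; apply: mz; exact: sub_sigma_algebra (open_interior _).
have zC k w : exists j, C k j w.
  have rk0 : 0 < k.+1%:R^-1 :> R by rewrite invr_gt0.
  have [j [_ zj]] :=
    dense_seq_interior_ball (S := setT) (x := z w) (fun x _ => eD x) I rk0 ltr01.
  by exists j.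
apply/meas_realE => //.
apply: (@measurable_fun_cvg _ (g_sigma_algebraType G) _ _
  (fun k w => phi (e (first_index (C k) w)) (y w))).
  move=> k; apply: (@measurable_fun_piecewise _ (g_sigma_algebraType G) _ _
    (first_index (C k)) (fun j w => phi (e j) (y w))) => j.
  - exact: (@measurable_first_index _ (g_sigma_algebraType G) (C k) (mC k)).
  - by apply/meas_realE => //; exact: meas_real_phi_cst.
move=> w _.
have zCw k : ball (z w) k.+1%:R^-1 (e (first_index (C k) w)).
  by apply: ball_sym; apply: interior_subset; exact: (first_indexP _ (zC k w)).1.
exact: cvg_comp _ _ (cvg_ball_invSn zCw) (phi_car.1 (y w) (z w)).
Qed.

Lemma dense_seq_phi_close {S : set X} {e : nat -> X} {s : X} (y : X) {r : R} :
  (forall x, S x -> forall r : R, 0 < r -> exists j, ball x r (e j)) ->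
  S s -> 0 < r -> exists j, (ball (e j) r)° s /\ `|phi s y - phi (e j) y| < r.
Proof.
move=> eD Ss r0.
have [delta delta0 sd] : nbhs_ball s (fun s' => ball (phi s y) r (phi s' y)).
  apply/nbhs_ballP.
  exact: (@cvg_ball _ _ _ _ (nbhs_filter s) _ _ (phi_car.1 y s) _ r0).
have [j [sej ejr]] := dense_seq_interior_ball eD Ss r0 delta0.
by exists j; split => //; exact: sd.
Qed.

End caratheodory_measurable.

Lemma limn_einf_le_near (R : realType) (u : (\bar R)^nat) (b : \bar R) :
  (\forall n \near \oo, (u n <= b)%E) -> (limn_einf u <= b)%E.
Proof.
move=> [K _ ub]; rewrite limn_einf_lim (cvg_lim _ (@cvg_einfs_sup _ u)) //.
apply: ub_ereal_sup => _ [n _ <-]; apply: (@le_trans _ _ (u (maxn n K))).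
  by apply: ereal_inf_lbound; exists (maxn n K) => //=; rewrite leq_maxl.
by apply: ub; rewrite /= leq_maxr.
Qed.

Section integral_bounds.
Context {d} {T : measurableType d} {R : realType}.
Local Open Scope ereal_scope.

Lemma ge0_integral_le_of_cvg (mu : {measure set T -> \bar R}) (D : set T)
    (f : (T -> \bar R)^nat) (g : T -> \bar R) (c : \bar R) :
  measurable D -> (forall k, measurable_fun D (f k)) ->
  (forall k w, D w -> 0 <= f k w) -> (forall w, D w -> f ^~ w @ \oo --> g w) ->
  (forall e : R, (0 < e)%R ->
    \forall k \near \oo, \int[mu]_(w in D) f k w <= c + e%:E) ->
  \int[mu]_(w in D) g w <= c.
Proof.
move=> mD mf f0 fg fc.
rewrite (eq_integral (fun w => limn_einf (f ^~ w))); last first.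
  by move=> w /set_mem Dw; rewrite (cvg_limn_einf_sup (fg w Dw)).1.
apply: le_trans (fatou mu mD mf f0) _; apply/lee_addgt0Pr => e e0.
exact/limn_einf_le_near/fc.
Qed.

Lemma ge0_integral_le_addr_cst (P : probability T R) (A : set T) (f g : T -> R)
    (c : R) : measurable A -> measurable_fun A f -> measurable_fun A g ->
  (forall w, A w -> 0 <= f w)%R -> (forall w, A w -> 0 <= g w)%R -> (0 <= c)%R ->
  (forall w, A w -> f w <= g w + c)%R ->
  \int[P]_(w in A) (f w)%:E <= \int[P]_(w in A) (g w)%:E + c%:E.
Proof.
move=> mA mf mg f0 g0 c0 fgc.
have mgE : measurable_fun A (fun w => (g w)%:E) by exact/measurable_EFinP.
have g0E w : A w -> 0 <= (g w)%:E by move=> Aw; rewrite lee_fin g0.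
have c0E w : A w -> 0 <= c%:E by rewrite lee_fin.
apply: (@le_trans _ _ (\int[P]_(w in A) ((g w)%:E + c%:E))).
  apply: ge0_le_integral.
  - exact: mA.
  - by move=> w Aw; rewrite lee_fin f0.
  - exact/measurable_EFinP.
  - by apply: emeasurable_funD => //; exact: measurable_cst.
  - by move=> w Aw; rewrite -EFinD lee_fin fgc.
rewrite (ge0_integralD P mA g0E mgE c0E (measurable_cst _)) leeD2l //.
by rewrite integral_cst // -[leRHS]mule1 lee_wpmul2l ?lee_fin // probability_le1.
Qed.

Lemma measure_eq0_of_integral_shift (mu : {finite_measure set T -> \bar R})
    (A : set T) (f : T -> R) (b r : R) :
  measurable A -> measurable_fun A f -> (forall w, A w -> 0 <= f w <= b)%R ->
  (0 < r)%R ->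
  \int[mu]_(w in A) (f w + r)%:E <= \int[mu]_(w in A) (f w)%:E -> mu A = 0.
Proof.
move=> mA mf fb r0.
have mfE : measurable_fun A (fun w => (f w)%:E) by exact/measurable_EFinP.
have f0 w : A w -> 0 <= (f w)%:E by move=> /fb /andP[+ _]; rewrite lee_fin.
have fin : \int[mu]_(w in A) (f w)%:E \is a fin_num.
  rewrite ge0_fin_numE ?integral_ge0 //.
  apply: (@le_lt_trans _ _ (\int[mu]_(w in A) (cst b%:E w))).
    apply: ge0_le_integral => //.
    by move=> w /fb /andP[_]; rewrite lee_fin.
  by rewrite integral_cst // ltey_eq fin_numM // fin_num_measure.
have r0E w : A w -> 0 <= r%:E by rewrite lee_fin ltW.
under eq_integral do rewrite EFinD.
rewrite (ge0_integralD mu mA f0 mfE r0E (measurable_cst _)) integral_cst //.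
rewrite -[leRHS]adde0 leeD2lE // pmule_rle0 ?lte_fin // => muA0.
by apply/eqP; rewrite eq_le muA0 measure_ge0.
Qed.

End integral_bounds.

(* Each set where [W] exceeds [f] by [1/(k+1)] inside [B m] is null by
   [measure_eq0_of_integral_shift]; countably many such sets cover the bad set. *)
Lemma ae_le_of_integral_le {d} {T : measurableType d} {R : realType}
    (mu : {finite_measure set T -> \bar R}) (W : T -> \bar R) (f : T -> R)
    (B : nat -> set T) :
  measurable_fun setT W -> measurable_fun setT f -> (forall m, measurable (B m)) ->
  (forall m w, B m w -> 0 <= f w <= m%:R) ->
  (forall m (r : R), 0 < r ->
     (\int[mu]_(w in B m `&` [set w | (f w + r)%:E <= W w]) W w <=
      \int[mu]_(w in B m `&` [set w | (f w + r)%:E <= W w]) (f w)%:E)%E) ->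
  {ae mu, forall w, (\bigcup_m B m) w -> (W w <= (f w)%:E)%E}.
Proof.
move=> mW mf mB fB Wf.
pose A m k := B m `&` [set w | ((f w + k.+1%:R^-1)%:E <= W w)%E].
have mA m k : measurable (A m k).
  rewrite /A -[B m]setIT -setIA; apply: measurableI => //.
  apply: measurable_lee => //; apply/measurable_EFinP.
  by apply: measurable_funD => //; exact: measurable_cst.
have A0 m k : mu (A m k) = 0%E.
  have rk0 : 0 < k.+1%:R^-1 :> R by rewrite invr_gt0.
  apply: (@measure_eq0_of_integral_shift _ _ _ _ _ f m%:R k.+1%:R^-1) => //.
  - exact: measurable_funTS.
  - by move=> w [/fB].
  - apply: le_trans (Wf m _ rk0); apply: ge0_le_integral => //.
    + by move=> w [/fB /andP[f0 _] _]; rewrite lee_fin addr_ge0 // ltW.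
    + apply/measurable_funTS/measurable_EFinP.
      by apply: measurable_funD => //; exact: measurable_cst.
    + exact: measurable_funTS.
    + by move=> w [].
apply: negligibleS (negligible_bigcup (fun m => negligible_bigcup
  (fun k => (negligibleP _ (mA m k)).2 (A0 m k)))).
move=> w /= nWf.
have [[m _ Bmw] fW] : (\bigcup_m B m) w /\ ((f w)%:E < W w)%E.
  have [Bw|nBw] := pselect ((\bigcup_m B m) w); last by exfalso; apply: nWf.
  by split => //; rewrite ltNge; apply/negP => Wf'; apply: nWf.
exists m => //; suff [k fkW] : exists k, ((f w + k.+1%:R^-1)%:E <= W w)%E by exists k.
move: fW; case: (W w) => [r| |] //; last by exists 0%N; rewrite leey.
rewrite lte_fin -subr_gt0 => fr.
have [k _ kP] := near_infty_natSinv_lt (PosNum fr).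
have kfr : k.+1%:R^-1 < r - f w := kP k (leqnn k).
by exists k; rewrite lee_fin -lerBrDl ltW.
Qed.

Section stochastic_quasi_fejer.
Context (R : realType) (X : completePseudoMetricType R) (d : measure_display)
  (Om : measurableType d) (P : probability Om R) (F : nat -> set (set Om))
  (S : set X) (phi : X -> X -> R) (x : nat -> Om -> X) (zeta xi : nat -> Om -> R).
Hypotheses (sepX : separable_space X) (hF : filtration F)
  (phi_ge0 : forall a b, 0 <= phi a b) (phi_car : caratheodory phi)
  (x_adapted : forall n, meas_to_borel (F n) (x n))
  (zeta_l1 : ell1_plus P F zeta) (xi_l1 : ell1_plus P F xi).

Let sF n : sigma_algebra setT (F n). Proof. by case: hF. Qed.
Let FM {n A} : F n A -> measurable A. Proof. by case: hF => _ [] + _; apply. Qed.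
Let zeta_ge0 n w : 0 <= zeta n w. Proof. by case: zeta_l1. Qed.
Let xi_ge0 n w : 0 <= xi n w. Proof. by case: xi_l1. Qed.

Definition fejer_rhs n (z : Om -> X) (w : Om) : R :=
  (1 + zeta n w) * phi (z w) (x n w) + xi n w.

Lemma fejer_rhs_ge0 n z w : 0 <= fejer_rhs n z w.
Proof. by rewrite addr_ge0 ?mulr_ge0 ?addr_ge0. Qed.

Lemma meas_real_fejer_rhs n z :
  meas_to_borel (F n) z -> meas_real (F n) (fejer_rhs n z).
Proof.
move=> mz; have [_ [mzeta _]] := zeta_l1; have [_ [mxi _]] := xi_l1.
apply/meas_realE => //; apply: measurable_funD; last exact/meas_realE.
apply: measurable_funM.
  by apply: measurable_funD; [exact: measurable_cst | exact/meas_realE].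
by apply/meas_realE => //; exact: meas_real_caratheodory.
Qed.

Lemma measurable_fejer_rhs n z :
  meas_to_borel (F n) z -> measurable_fun setT (fejer_rhs n z).
Proof.
by move=> mz; apply: (meas_real_measurable (@FM n)); exact: meas_real_fejer_rhs.
Qed.

Lemma fejer_rhs_perturb n (z z' : Om -> X) (M r : R) w :
  zeta n w <= M -> `|phi (z w) (x n w) - phi (z' w) (x n w)| < r ->
  fejer_rhs n z' w <= fejer_rhs n z w + (1 + M) * r.
Proof.
rewrite /fejer_rhs ltr_norml => zM /andP[zz' z'z].
have := zeta_ge0 n w; nra.
Qed.

Lemma measurable_phi_next_cst n s : measurable_fun setT (fun w => phi s (x n.+1 w)).
Proof.
by apply: (meas_real_measurable (@FM n.+1)); exact: meas_real_phi_cst.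
Qed.

Lemma step_approx n (z : Om -> X) (e : nat -> X) :
  meas_to_borel (F n) z ->
  (forall s, S s -> forall r : R, 0 < r -> exists j, ball s r (e j)) ->
  exists J : nat -> Om -> nat, (forall k j, F n (J k @^-1` [set j])) /\
    forall k w, S (z w) -> ball (z w) k.+1%:R^-1 (e (J k w)) /\
      `|phi (z w) (x n w) - phi (e (J k w)) (x n w)| < k.+1%:R^-1.
Proof.
move=> mz eD.
pose C k j := [set w | (ball (e j) k.+1%:R^-1)° (z w) /\
  `|phi (z w) (x n w) - phi (e j) (x n w)| < k.+1%:R^-1].
have FC k j : measurable (C k j : set (g_sigma_algebraType (F n))).
  have mdist : measurable_fun [set: g_sigma_algebraType (F n)]
      (fun w => `|phi (z w) (x n w) - phi (e j) (x n w)|).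
    apply/measurableT_comp/measurable_funB; first exact: normr_measurable.
      by apply/meas_realE => //; exact: meas_real_caratheodory.
    by apply/meas_realE => //; exact: meas_real_phi_cst.
  rewrite -[C k j]/(z @^-1` (ball (e j) k.+1%:R^-1)° `&`
    (fun w => `|phi (z w) (x n w) - phi (e j) (x n w)|) @^-1` `]-oo, k.+1%:R^-1[).
  apply: measurableI.
    by rewrite g_measurableE //; apply: mz; exact: sub_sigma_algebra (open_interior _).
  by rewrite -[X in measurable X]setTI; apply: mdist => //; exact: measurable_itv.
exists (fun k => first_index (C k)); split.
  move=> k j.
  by have := @measurable_first_index _ (g_sigma_algebraType (F n)) _ (FC k) j;
    rewrite g_measurableE.
move=> k w Szw; have [zC phiC] : C k (first_index (C k) w) w.
  apply: (first_indexP _ _).1.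
  by apply: (dense_seq_phi_close phi_car (x n w) eD Szw); rewrite invr_gt0.
by split => //; apply: ball_sym; exact: interior_subset.
Qed.

Hypothesis fejer : stoch_qF P F phi S x zeta xi.

(* [fejer] only constrains versions of the conditional expectation, so one has
   to be exhibited. *)
Lemma integral_phi_cst_le n s B : S s -> F n B ->
  (\int[P]_(w in B) (phi s (x n.+1 w))%:E <=
   \int[P]_(w in B) (fejer_rhs n (fun=> s) w)%:E)%E.
Proof.
move=> Ss FB.
have [W W0 WY] := @cond_exp_ge0_exists _ _ _ P (F n) (sF n) (@FM n) _
  (fun w => phi_ge0 s (x n.+1 w)) (measurable_phi_next_cst n s).
have [mW WE] := WY; rewrite WE //.
apply: ae_ge0_le_integral => //.
- exact: FM FB.
- exact/measurable_funTS/(meas_ereal_measurable (@FM n)).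
- by move=> w _; rewrite lee_fin fejer_rhs_ge0.
- apply/measurable_funTS/measurable_EFinP/measurable_fejer_rhs.
  exact: meas_to_borel_cst.
- by apply: filterS (fejer _ _ Ss _ WY) => w + _.
Qed.

Lemma integral_phi_piecewise_le n (e : nat -> X) (J : Om -> nat) A :
  (forall j, S (e j)) -> (forall j, F n (J @^-1` [set j])) -> F n A ->
  (\int[P]_(w in A) (phi (e (J w)) (x n.+1 w))%:E <=
   \int[P]_(w in A) (fejer_rhs n (e \o J) w)%:E)%E.
Proof.
move=> Se FJ FA; have mJ j := FM (FJ j).
have mfejer j : measurable_fun setT (fejer_rhs n (fun=> e j)).
  by apply: measurable_fejer_rhs; exact: meas_to_borel_cst.
rewrite !(ge0_integral_fibers P J A _ (FM FA) mJ).
- apply: lee_nneseries => [j _ _|j _].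
    by apply: integral_ge0 => w _; rewrite lee_fin.
  rewrite (eq_integral (fun w => (phi (e j) (x n.+1 w))%:E)); last first.
    by move=> w /set_mem [_ /= ->].
  rewrite [leRHS](eq_integral (fun w => (fejer_rhs n (fun=> e j) w)%:E)); last first.
    by move=> w /set_mem [_ /= Jw]; rewrite /fejer_rhs /= Jw.
  exact/integral_phi_cst_le/sub_sigmaI.
- apply/measurable_funTS/measurable_EFinP.
  exact: (measurable_fun_piecewise J _ mJ mfejer).
- by move=> w _; rewrite lee_fin fejer_rhs_ge0.
- apply/measurable_funTS/measurable_EFinP.
  exact: (measurable_fun_piecewise J _ mJ (fun j => measurable_phi_next_cst n (e j))).
- by move=> w _; rewrite lee_fin.
Qed.

Hypothesis S_neq0 : S !=set0.

(* Fatou's lemma along the approximations of [step_approx], to each piece of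
   which the constant case applies. *)
Lemma integral_phi_le_fejer_rhs n (z : Om -> X) (A : set Om) (M : R) :
  0 <= M -> meas_to_borel (F n) z -> F n A ->
  (forall w, A w -> S (z w) /\ zeta n w <= M) ->
  (\int[P]_(w in A) (phi (z w) (x n.+1 w))%:E <=
   \int[P]_(w in A) (fejer_rhs n z w)%:E)%E.
Proof.
move=> M0 mz FA Az.
have [e [Se eD]] := separable_subset_dense_seq S sepX S_neq0.
have [J [FJ Jz]] := step_approx n z e mz eD.
apply: (@ge0_integral_le_of_cvg _ _ _ P A
  (fun k w => (phi (e (J k w)) (x n.+1 w))%:E)).
- exact: FM FA.
- move=> k; apply/measurable_funTS/measurable_EFinP.
  exact: measurable_fun_piecewise (fun j => FM (FJ k j))
    (fun j => measurable_phi_next_cst n (e j)).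
- by move=> k w _; rewrite lee_fin.
- move=> w /Az[Szw _]; apply: cvg_EFin; first exact: nearW.
  have zJ k : ball (z w) k.+1%:R^-1 (e (J k w)) by case: (Jz k w Szw).
  exact: cvg_comp _ _ (cvg_ball_invSn zJ) (phi_car.1 (x n.+1 w) (z w)).
move=> eps eps0; have M1 : 0 < 1 + M by rewrite ltr_pwDl.
have [K _ KP] := near_infty_natSinv_lt (PosNum (divr_gt0 eps0 M1)).
exists K => // k /= Kk.
apply: le_trans (integral_phi_piecewise_le n e (J k) A Se (FJ k) FA) _.
have mJfejer : measurable_fun setT (fejer_rhs n (e \o J k)).
  apply: (measurable_fun_piecewise (J k) (fun j => fejer_rhs n (fun=> e j))
    (fun j => FM (FJ k j))) => j.
  exact/measurable_fejer_rhs/meas_to_borel_cst.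
have c0 : 0 <= (1 + M) * k.+1%:R^-1 by rewrite mulr_ge0 // ltW.
have Jfejer w : A w ->
    fejer_rhs n (e \o J k) w <= fejer_rhs n z w + (1 + M) * k.+1%:R^-1.
  move=> /Az[Szw zM]; apply: fejer_rhs_perturb zM _; exact: (Jz k w Szw).2.
apply: le_trans (ge0_integral_le_addr_cst P A _ _ _ (FM FA)
  (measurable_funTS mJfejer) (measurable_funTS (measurable_fejer_rhs n z mz))
  (fun w _ => fejer_rhs_ge0 n _ w) (fun w _ => fejer_rhs_ge0 n z w) c0 Jfejer) _.
rewrite leeD2l // lee_fin -ler_pdivlMl // mulrC; exact/ltW/KP.
Qed.

Hypothesis S_closed : closed S.

Lemma stoch_qF_strong : strong_stoch_qF P F phi S x zeta xi.
Proof.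
move=> n z mz Sz _ W [mW WE].
pose B m := [set w | S (z w) /\ zeta n w <= m%:R /\ fejer_rhs n z w <= m%:R].
have FB m : F n (B m).
  apply: (sub_sigmaI (sF n) (meas_to_borel_closed mz S_closed)).
  apply: (sub_sigmaI (sF n)); apply: meas_real_le; first by case: zeta_l1 => _ [].
  exact: meas_real_fejer_rhs.
have mWG : measurable_fun [set: g_sigma_algebraType (F n)] W by exact/meas_erealE.
have W_le : {ae P, forall w, (\bigcup_m B m) w -> (W w <= (fejer_rhs n z w)%:E)%E}.
  apply: (ae_le_of_integral_le P W (fejer_rhs n z) B
    (meas_ereal_measurable (@FM n) _ mW) (measurable_fejer_rhs n z mz)
    (fun m => FM (FB m))).
    by move=> m w [_ [_ fm]]; rewrite fejer_rhs_ge0.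
  move=> m r r0.
  have FA : F n (B m `&` [set w | ((fejer_rhs n z w + r)%:E <= W w)%E]).
    apply: (sub_sigmaI (sF n) (FB m)).
    have mfr : measurable_fun [set: g_sigma_algebraType (F n)]
        (fun w => (fejer_rhs n z w + r)%:E).
      apply/measurable_EFinP/measurable_funD; last exact: measurable_cst.
      exact/meas_realE/meas_real_fejer_rhs.
    by have := measurable_lee measurableT mfr mWG; rewrite setTI g_measurableE.
  rewrite -WE //; apply: integral_phi_le_fejer_rhs (ler0n _ m) mz FA _.
  by move=> w [[Szw [zm _]] _].
apply: filterS2 Sz W_le => w Szw; apply.
exists (Num.bound (zeta n w + fejer_rhs n z w)) => //.
have /ltW := archi_boundP (addr_ge0 (zeta_ge0 n w) (fejer_rhs_ge0 n z w)).
by have := zeta_ge0 n w; have := fejer_rhs_ge0 n z w; split => //; split; lra.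
Qed.

End stochastic_quasi_fejer.

Theorem proposition4p5 (R : realType) (X : completePseudoMetricType R)
  (d : measure_display) (Om : measurableType d) (P : probability Om R)
  (F : nat -> set (set Om)) (S : set X) (phi : X -> X -> R) (H : R -> R)
  (x : nat -> Om -> X) (zeta xi : nat -> Om -> R) (o : X) :
  hausdorff_space X -> separable_space X ->
  filtration F ->
  S !=set0 -> closed S ->
  (forall a b, 0 <= phi a b) -> caratheodory phi ->
  (forall a, phi a a = 0) ->
  (forall t, 0 <= t -> 0 <= H t) ->
  (forall s t, 0 <= s -> s <= t -> H s <= H t) ->
  (forall s t l, 0 <= s -> 0 <= t -> 0 <= l -> l <= 1 ->
     l * H s + (1 - l) * H t <= H (l * s + (1 - l) * t)) ->
  weak_quasi_triangle phi H ->
  (forall n, meas_to_borel (F n) (x n)) ->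
  ell1_plus P F zeta -> ell1_plus P F xi ->
  stoch_qF P F phi S x zeta xi ->
  S o ->
  (forall n, (\int[P]_w (phi o (x n w))%:E < +oo)%E) ->
  strong_stoch_qF P F phi S x zeta xi.
Proof.
(* Conditional expectations of nonnegative variables are taken in [0, +oo]. *)
move=> _ sepX hF S_neq0 S_closed phi_ge0 phi_car _ _ _ _ _ x_adapted zeta_l1 xi_l1
  fejer _ _.
by apply: stoch_qF_strong.
Qed.
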